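(* Let $X\sim \mathrm{Po}(\lambda)$ with $P(X=k)=e^{-\lambda}\lambda^k/k!$ and $Y\sim\mathrm{Ge}(p)$ with $P(Y=k)=q^kp$, $k\in\mathbb{Z}_+$, where $p\in(0,1]$ and $q=1-p$, and assume $X$ and $Y$ are independent. Then a Stein operator for $X+Y$ is $$\bar{\mathscr{A}}_{X+Y}h(j)=\Big(\lambda+\frac{q}{p}\Big)h(j+1)-j\,h(j)+\sum_{k=0}^{\infty}\sum_{l=1}^{k}q^{k+1}\,\Delta h(j+l),\qquad j\in\mathbb{Z}_+,$$ that is, $\mathbb{E}[\bar{\mathscr{A}}_{X+Y}h(X+Y)]=0$ for all $h\in H_{X+Y}$.
   Context: $\Delta h(j)=h(j+1)-h(j)$ is the forward difference. $H$ denotes the set of bounded functions $h:\mathbb{Z}_+\to\mathbb{R}$, and for a random variable $\bar X$, $H_{\bar X}=\{h\in H: h(0)=0 \text{ and } h(j)=0 \text{ for } j\notin \mathrm{Supp}(\bar X)\}$. A Stein operator for $\bar X$ is an operator $\mathscr{A}_{\bar X}$ with $\mathbb{E}[\mathscr{A}_{\bar X}h(\bar X)]=0$ for the relevant class of $h$. *)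

From Stdlib Require Import Reals Arith Factorial.
From Coquelicot Require Import Coquelicot.
Open Scope R_scope.

Definition poisson_pmf (lam : R) (k : nat) : R :=
  exp (- lam) * lam ^ k / INR (Factorial.fact k).

Definition geom_pmf (p : R) (k : nat) : R := (1 - p) ^ k * p.

Definition sum_indep_pmf (f g : nat -> R) (j : nat) : R :=
  sum_f_R0 (fun i => f i * g (j - i)%nat) j.

Definition in_supp (f : nat -> R) (j : nat) : Prop := 0 < f j.

Definition bounded_fun (h : nat -> R) : Prop :=
  exists M : R, forall j : nat, Rabs (h j) <= M.

Definition H_of (f : nat -> R) (h : nat -> R) : Prop :=
  bounded_fun h /\ h 0%nat = 0 /\ (forall j : nat, ~ in_supp f j -> h j = 0).

Definition fdiff (h : nat -> R) (j : nat) : R := h (S j) - h j.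

Definition expect_is (f : nat -> R) (g : nat -> R) (v : R) : Prop :=
  is_series (fun j => f j * g j) v.

Fixpoint sum_1_to (k : nat) (F : nat -> R) : R :=
  match k with
  | O => 0
  | S k' => sum_1_to k' F + F (S k')
  end.

Definition stein_op_PoGe (lam p : R) (h : nat -> R) (j : nat) : R :=
  let q := 1 - p in
  (lam + q / p) * h (S j) - INR j * h j
  + Series (fun k : nat =>
       sum_1_to k (fun l => q ^ (k + 1) * fdiff h (j + l)%nat)).

(* Since [sum_(l=1..k) fdiff h (j + l)] telescopes, the operator equals
   [lam h(j+1) - j h(j) + t(j)] with [t(j) = sum_k q^(k+1) h(j+1+k)], and
   [t(j) = q h(j+1) + q t(j+1)].  The pmf [g] of [X + Y] satisfies
   [(n+1) g(n+1) = lam g(n) + q D(n)] with [D(n) = sum_(i<=n) q^(n-i) g(i)], so the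
   [N]-th partial sum of [E[A h(X+Y)]] telescopes to [lam g(N) h(N+1) + D(N) t(N)].
   Both [g] and [D] decay like [(1 - p/2)^N], hence the partial sums tend to [0]. *)

From Stdlib Require Import Reals Arith Factorial Lra Lia.
From Coquelicot Require Import Coquelicot.
Open Scope R_scope.

Lemma poisson_pmf_succ (lam : R) (n : nat) :
  INR (S n) * poisson_pmf lam (S n) = lam * poisson_pmf lam n.
Proof.
  unfold poisson_pmf. rewrite fact_simpl, mult_INR. simpl pow.
  assert (INR (fact n) <> 0) by apply INR_fact_neq_0.
  assert (INR (S n) <> 0) by (apply not_0_INR; lia).
  field; auto.
Qed.

Lemma pow_div_fact_le_exp (x : R) (n : nat) : 0 <= x -> x ^ n / INR (fact n) <= exp x.
Proof.
  intros Hx. eapply Rle_trans; [| exact (exp_ge_taylor x n Hx)].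
  destruct n as [|n]; [simpl; lra|]. rewrite tech5.
  enough (0 <= sum_f_R0 (fun k => x ^ k / INR (fact k)) n) by lra.
  apply cond_pos_sum. intros k.
  apply Rdiv_le_0_compat; [apply pow_le; lra | apply INR_fact_lt_0].
Qed.

Lemma poisson_pmf_nonneg (lam : R) (n : nat) : 0 <= lam -> 0 <= poisson_pmf lam n.
Proof.
  intros Hlam. unfold poisson_pmf. apply Rdiv_le_0_compat; [| apply INR_fact_lt_0].
  apply Rmult_le_pos; [left; apply exp_pos | apply pow_le; lra].
Qed.

Lemma poisson_pmf_le_geom (lam r : R) (n : nat) : 0 <= lam -> 0 < r ->
  poisson_pmf lam n <= exp (- lam) * exp (lam / r) * r ^ n.
Proof.
  intros Hlam Hr. unfold poisson_pmf.
  replace (exp (- lam) * lam ^ n / INR (fact n))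
    with (exp (- lam) * r ^ n * ((lam / r) ^ n / INR (fact n))).
  2:{ unfold Rdiv. rewrite Rpow_mult_distr, pow_inv. field.
       split; [apply INR_fact_neq_0 | apply pow_nonzero; lra]. }
  replace (exp (- lam) * exp (lam / r) * r ^ n) with (exp (- lam) * r ^ n * exp (lam / r)) by ring.
  apply Rmult_le_compat_l.
  - apply Rmult_le_pos; [left; apply exp_pos | apply pow_le; lra].
  - apply pow_div_fact_le_exp. apply Rdiv_le_0_compat; lra.
Qed.

(* [discounted_sum q a n = sum_(i <= n) q ^ (n - i) * a i] *)
Fixpoint discounted_sum (q : R) (a : nat -> R) (n : nat) : R :=
  match n with
  | O => a O
  | S m => q * discounted_sum q a m + a (S m)
  end.

Lemma sum_indep_pmf_geom (f : nat -> R) (p : R) (n : nat) :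
  sum_indep_pmf f (geom_pmf p) n = discounted_sum (1 - p) (fun k => f k * p) n.
Proof.
  unfold sum_indep_pmf. induction n as [|n IH].
  - unfold geom_pmf. simpl. ring.
  - rewrite tech5, Nat.sub_diag. cbn [discounted_sum]. rewrite <- IH, scal_sum.
    unfold geom_pmf at 2. simpl pow. f_equal; [| ring].
    apply sum_eq. intros i Hi. rewrite Nat.sub_succ_l by lia. unfold geom_pmf. simpl. ring.
Qed.

Lemma discounted_sum_le_geom (q r C : R) (a : nat -> R) :
  0 <= q < r -> (forall n, 0 <= a n <= C * r ^ n) ->
  forall n, 0 <= discounted_sum q a n <= C * r / (r - q) * r ^ n.
Proof.
  intros Hqr Ha.
  assert (HC : 0 <= C) by (specialize (Ha O); simpl in Ha; lra).
  assert (HK : C <= C * r / (r - q)).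
  { apply (Rmult_le_reg_r (r - q)); [lra|]. field_simplify; nra. }
  induction n as [|n IH]; cbn [discounted_sum].
  - specialize (Ha O). simpl in *. lra.
  - specialize (Ha (S n)). split; [nra|].
    apply Rle_trans with (q * (C * r / (r - q) * r ^ n) + C * r ^ S n); [nra|].
    right. simpl. field. lra.
Qed.

Lemma discounted_sum_poisson_rec (lam q : R) (a : nat -> R) :
  (forall n, INR (S n) * a (S n) = lam * a n) ->
  forall n, INR (S n) * discounted_sum q a (S n)
            = lam * discounted_sum q a n + q * discounted_sum q (discounted_sum q a) n.
Proof.
  intros Ha n. induction n as [|n IH].
  - cbn [discounted_sum]. specialize (Ha O). simpl INR in *. lra.
  - cbn [discounted_sum] in *.
    replace (INR (S (S n)) * (q * (q * discounted_sum q a n + a (S n)) + a (S (S n))))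
      with (q * (INR (S n) * (q * discounted_sum q a n + a (S n)))
            + q * (q * discounted_sum q a n + a (S n)) + INR (S (S n)) * a (S (S n)))
      by (rewrite (S_INR (S n)); ring).
    rewrite IH, Ha. ring.
Qed.

Lemma sum_1_to_fdiff (h : nat -> R) (c : R) (j k : nat) :
  sum_1_to k (fun l => c * fdiff h (j + l)%nat) = c * (h (S (j + k)) - h (S j)).
Proof.
  induction k as [|k IH]; cbn [sum_1_to].
  - rewrite Nat.add_0_r. ring.
  - rewrite IH. unfold fdiff. rewrite Nat.add_succ_r. ring.
Qed.

Lemma is_series_geom_succ (q c : R) :
  Rabs q < 1 -> is_series (fun k => q ^ (k + 1) * c) (c * q / (1 - q)).
Proof.
  intros Hq.
  assert (Hq1 : 1 - q <> 0) by (apply Rabs_def2 in Hq; lra).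
  replace (c * q / (1 - q)) with (scal (c * q) (/ (1 - q)))
    by (unfold scal; simpl; unfold mult; simpl; field; exact Hq1).
  eapply is_series_ext; [| exact (is_series_scal_l _ _ _ (is_series_geom q Hq))].
  intros k. unfold scal; simpl; unfold mult; simpl. rewrite pow_add. ring.
Qed.

Section GeometricTail.

Variables (q M : R) (h : nat -> R).
Hypothesis Hq : 0 <= q < 1.
Hypothesis HM : forall j, Rabs (h j) <= M.

Definition geom_tail (j : nat) : R := Series (fun k => q ^ (k + 1) * h (S (j + k))).

Let Hq_abs : Rabs q < 1.
Proof. rewrite Rabs_pos_eq; lra. Qed.

Let geom_tail_term_le (j k : nat) : Rabs (q ^ (k + 1) * h (S (j + k))) <= q ^ (k + 1) * M.
Proof.
  rewrite Rabs_mult, (Rabs_pos_eq (q ^ _)) by (apply pow_le; lra).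
  apply Rmult_le_compat_l; [apply pow_le; lra | apply HM].
Qed.

Lemma ex_series_geom_tail_abs (j : nat) :
  ex_series (fun k => Rabs (q ^ (k + 1) * h (S (j + k)))).
Proof.
  apply (@ex_series_le R_AbsRing R_CompleteNormedModule _ (fun k => q ^ (k + 1) * M)).
  - intros k. change (norm ?x) with (Rabs x). rewrite Rabs_Rabsolu. apply geom_tail_term_le.
  - eexists. exact (is_series_geom_succ q M Hq_abs).
Qed.

Lemma geom_tail_bound (j : nat) : Rabs (geom_tail j) <= M * q / (1 - q).
Proof.
  eapply Rle_trans; [exact (Series_Rabs _ (ex_series_geom_tail_abs j)) |].
  rewrite <- (is_series_unique _ _ (is_series_geom_succ q M Hq_abs)).
  apply Series_le; [| eexists; exact (is_series_geom_succ q M Hq_abs)].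
  intros k. split; [apply Rabs_pos | apply geom_tail_term_le].
Qed.

Lemma geom_tail_succ (j : nat) : geom_tail j = q * h (S j) + q * geom_tail (S j).
Proof.
  unfold geom_tail.
  rewrite (Series_incr_1 _ (ex_series_Rabs _ (ex_series_geom_tail_abs j))), <- Series_scal_l.
  rewrite Nat.add_0_r. simpl pow. f_equal; [ring |].
  apply Series_ext. intros k.
  replace (S k + 1)%nat with (S (k + 1)) by lia.
  replace (j + S k)%nat with (S j + k)%nat by lia. simpl pow. ring.
Qed.

End GeometricTail.

Lemma stein_op_PoGe_geom_tail (lam p M : R) (h : nat -> R) (j : nat) :
  0 < p <= 1 -> (forall j, Rabs (h j) <= M) ->
  stein_op_PoGe lam p h j = lam * h (S j) - INR j * h j + geom_tail (1 - p) h j.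
Proof.
  intros Hp HM.
  assert (Hq : 0 <= 1 - p < 1) by lra.
  assert (Hq_abs : Rabs (1 - p) < 1) by (rewrite Rabs_pos_eq; lra).
  unfold stein_op_PoGe, geom_tail.
  rewrite (Series_ext _ (fun k => (1 - p) ^ (k + 1) * h (S (j + k))
                                  - (1 - p) ^ (k + 1) * h (S j)))
    by (intros k; rewrite sum_1_to_fdiff; ring).
  rewrite Series_minus;
    [| exact (ex_series_Rabs _ (ex_series_geom_tail_abs _ _ _ Hq HM j))
     | eexists; exact (is_series_geom_succ _ (h (S j)) Hq_abs)].
  rewrite (is_series_unique _ _ (is_series_geom_succ _ (h (S j)) Hq_abs)).
  field. lra.
Qed.

Lemma sum_f_R0_stein_telescope (lam q : R) (g h t : nat -> R) :
  (forall n, INR (S n) * g (S n) = lam * g n + q * discounted_sum q g n) ->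
  (forall j, t j = q * h (S j) + q * t (S j)) ->
  forall N, sum_f_R0 (fun j => g j * (lam * h (S j) - INR j * h j + t j)) N
            = lam * g N * h (S N) + discounted_sum q g N * t N.
Proof.
  intros Hg Ht N. induction N as [|N IH].
  - simpl. ring.
  - rewrite tech5, IH, (Ht N). cbn [discounted_sum].
    replace (g (S N) * (lam * h (S (S N)) - INR (S N) * h (S N) + t (S N)))
      with (g (S N) * (lam * h (S (S N)) + t (S N)) - INR (S N) * g (S N) * h (S N)) by ring.
    rewrite Hg. ring.
Qed.

Lemma is_lim_seq_geom_dominated (u : nat -> R) (W r : R) :
  0 <= r < 1 -> (forall n, Rabs (u n) <= W * r ^ n) -> is_lim_seq u 0.
Proof.
  intros Hr Hu. apply is_lim_seq_abs_0.
  apply (is_lim_seq_le_le (fun _ => 0) _ (fun n => W * r ^ n)).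
  - intros n. split; [apply Rabs_pos | apply Hu].
  - apply is_lim_seq_const.
  - replace (Finite 0) with (Rbar_mult W 0) by (simpl; f_equal; ring).
    apply is_lim_seq_scal_l, is_lim_seq_geom. rewrite Rabs_pos_eq; lra.
Qed.

Lemma is_series_stein_telescope (lam q r K1 K2 M B : R) (g h t : nat -> R) :
  0 <= lam -> 0 <= r < 1 ->
  (forall n, INR (S n) * g (S n) = lam * g n + q * discounted_sum q g n) ->
  (forall j, t j = q * h (S j) + q * t (S j)) ->
  (forall n, 0 <= g n <= K1 * r ^ n) ->
  (forall n, 0 <= discounted_sum q g n <= K2 * r ^ n) ->
  (forall j, Rabs (h j) <= M) -> (forall j, Rabs (t j) <= B) ->
  is_series (fun j => g j * (lam * h (S j) - INR j * h j + t j)) 0.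
Proof.
  intros Hlam Hr Hg Ht Hg_le HDg_le HM HB.
  apply (is_lim_seq_geom_dominated _ (lam * K1 * M + K2 * B) r Hr). intros N.
  rewrite sum_n_Reals, (sum_f_R0_stein_telescope lam q g h t Hg Ht).
  destruct (Hg_le N), (HDg_le N).
  pose proof (HM (S N)). pose proof (HB N).
  pose proof (Rabs_pos (h (S N))). pose proof (Rabs_pos (t N)).
  assert (Hgh : g N * Rabs (h (S N)) <= K1 * r ^ N * M) by (apply Rmult_le_compat; lra).
  assert (HDgt : discounted_sum q g N * Rabs (t N) <= K2 * r ^ N * B)
    by (apply Rmult_le_compat; lra).
  eapply Rle_trans; [apply Rabs_triang|].
  rewrite !Rabs_mult, (Rabs_pos_eq lam), (Rabs_pos_eq (g N)),
    (Rabs_pos_eq (discounted_sum q g N)) by lra.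
  nra.
Qed.

Theorem proposition3p2 (lam p : R) (Hlam : 0 < lam) (Hp0 : 0 < p) (Hp1 : p <= 1)
  (h : nat -> R) :
  H_of (sum_indep_pmf (poisson_pmf lam) (geom_pmf p)) h ->
  expect_is (sum_indep_pmf (poisson_pmf lam) (geom_pmf p))
            (stein_op_PoGe lam p h) 0.
Proof.
  intros [[M HM] _].
  set (q := 1 - p). set (r := 1 - p / 2).
  set (a := fun k => poisson_pmf lam k * p). set (g := discounted_sum q a).
  assert (Hq : 0 <= q < 1) by (unfold q; lra).
  assert (Hqr : 0 <= q < r) by (unfold q, r; lra).
  assert (Ha : forall n, 0 <= a n <= exp (- lam) * exp (lam / r) * p * r ^ n).
  { intros n. unfold a. pose proof (poisson_pmf_le_geom lam r n).
    pose proof (poisson_pmf_nonneg lam n). split; nra. }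
  pose proof (discounted_sum_le_geom _ _ _ _ Hqr Ha) as Hg.
  unfold expect_is.
  apply (is_series_ext (fun j => g j * (lam * h (S j) - INR j * h j + geom_tail q h j))).
  { intros j. unfold g. rewrite sum_indep_pmf_geom, (stein_op_PoGe_geom_tail lam p M); auto. }
  eapply (is_series_stein_telescope lam q r).
  - lra.
  - unfold r; lra.
  - apply discounted_sum_poisson_rec. intros n. unfold a.
    rewrite <- Rmult_assoc, poisson_pmf_succ. ring.
  - intros j. apply (geom_tail_succ q M h Hq HM).
  - exact Hg.
  - exact (discounted_sum_le_geom _ _ _ _ Hqr Hg).
  - exact HM.
  - intros j. exact (geom_tail_bound q M h Hq HM j).
Qed.
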